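(* For every $n\ge 2$, the operator system $C(S^1)^{(n)}$ of $n\times n$ complex Toeplitz matrices is hyperrigid in $M_n(\mathbb C)$.
   Context: $C(S^1)^{(n)}\subseteq M_n(\mathbb C)$ is the set of Toeplitz matrices $[\tau_{k-\ell}]_{k,\ell=0}^{n-1}$. An operator subsystem $\mathcal R$ of a unital C$^*$-algebra $\mathcal A$ is hyperrigid in $\mathcal A$ if, for every representation $\pi:\mathcal A\to B(\mathcal H_\pi)$, the unital completely positive map $\pi|_{\mathcal R}$ has a unique extension to a completely positive linear map on $\mathcal A$ (namely $\pi$ itself). *)

(* complex numbers are  R[i] = complex R  over an arbitrary
   R : realType (mathcomp-real-closed complex.v), which is a
   numClosedFieldType (conjugation  z^* , order  0 <= z  meaning "z real, >= 0"). *)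
From HB Require Import structures.
From mathcomp Require Import all_boot all_order all_algebra.
From mathcomp Require Import reals.
From mathcomp Require Import complex.
Set Implicit Arguments.
Unset Strict Implicit.
Unset Printing Implicit Defensive.
Import Order.TTheory GRing.Theory Num.Theory.
Local Open Scope ring_scope.
Local Open Scope complex_scope.

Section Defs.
Variable R : realType.
Local Notation C := R[i].

Section Hilbert.
Variable H : lmodType C.
Variable ip : H -> H -> C.   (* inner product, linear in the first argument *)

Definition is_hilbert : Prop :=
  [/\ (forall a x y z, ip (a *: x + y) z = a * ip x z + ip y z),
      (forall x y, ip y x = (ip x y)^*),
      (forall x, 0 <= ip x x),
      (forall x, ip x x = 0 -> x = 0) &
      (* completeness w.r.t. the norm ||x|| = sqrt(ip x x) *)
      (forall u : nat -> H,
         (forall eps : C, 0 < eps -> exists N : nat, forall m k : nat,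
             (N <= m)%N -> (N <= k)%N -> ip (u m - u k) (u m - u k) < eps) ->
         exists x : H, forall eps : C, 0 < eps -> exists N : nat, forall m : nat,
             (N <= m)%N -> ip (u m - x) (u m - x) < eps)].

Definition bounded_op (T : H -> H) : Prop :=
  (forall a x y, T (a *: x + y) = a *: T x + T y) /\
  exists M : C, forall x, ip (T x) (T x) <= M * ip x x.

Definition mxadj n (a : 'M[C]_n) : 'M[C]_n := \matrix_(i, j) (a j i)^*.

Definition is_rep n (pi : 'M[C]_n -> H -> H) : Prop :=
  [/\ (forall a, bounded_op (pi a)),
      (forall c a b x, pi (c *: a + b) x = c *: pi a x + pi b x),
      (forall x, pi 1%:M x = x),
      (forall a b x, pi (a *m b) x = pi a (pi b x)) &
      (forall a x y, ip (pi a x) y = ip x (pi (mxadj a) y))].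

(* An element [a_ij] of
   M_k(M_n(C)) = M_(kn)(C) is positive iff its quadratic form is >= 0;
   an element [T_ij] of M_k(B(H)) = B(H^k) is positive iff
   sum_ij <T_ij x_j, x_i> >= 0 for all x in H^k. *)
Definition is_cp n (phi : 'M[C]_n -> H -> H) : Prop :=
  [/\ (forall a, bounded_op (phi a)),
      (forall c a b x, phi (c *: a + b) x = c *: phi a x + phi b x) &
      (forall (k : nat) (A : 'I_k -> 'I_k -> 'M[C]_n),
         (forall v : 'I_k -> 'I_n -> C,
            0 <= \sum_(i < k) \sum_(j < k) \sum_(r < n) \sum_(s < n)
                   (v i r)^* * A i j r s * v j s) ->
         forall x : 'I_k -> H,
            0 <= \sum_(i < k) \sum_(j < k) ip (phi (A i j) (x j)) (x i))].
End Hilbert.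

(* Toeplitz matrices [tau_(k-l)]_(k,l) : the operator system C(S^1)^(n) *)
Definition toeplitz n (a : 'M[C]_n) : Prop :=
  exists tau : int -> C, a = \matrix_(k, l) tau (k%:Z - l%:Z).

Definition hyperrigid_in_Mn n (S : 'M[C]_n -> Prop) : Prop :=
  forall (H : lmodType C) (ip : H -> H -> C), is_hilbert ip ->
  forall pi : 'M[C]_n -> H -> H, is_rep ip pi ->
  forall phi : 'M[C]_n -> H -> H, is_cp ip phi ->
  (forall a, S a -> forall x, phi a x = pi a x) ->
  forall a x, phi a x = pi a x.
End Defs.

(* Let phi be a unital completely positive map that agrees with a
   *-representation pi on the Toeplitz matrices.  Positivity of phi on 2x2
   Gram matrices gives the Kadison-Schwarz inequality phi(c^* c) >= pi(c^* c)
   whenever phi and pi agree on c and c^*; positivity on 3x3 Gram matrices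
   shows that equality forces phi(c^* b) = pi(c)^* phi(b) for every b, i.e. c
   lies in the multiplicative domain of phi.  For the shift S, the sum
   S^k S^k* + S^(n-k)* S^(n-k) = 1 is Toeplitz, so both Schwarz defects
   vanish and every power of S and of S^* is in the multiplicative domain.
   Since each matrix unit is E_ij = S^i S^(n-1)* S^(n-1-j), phi and pi agree
   on a basis of M_n. *)
From HB Require Import structures.
From mathcomp Require Import all_boot all_order all_algebra.
From mathcomp Require Import reals complex.
From mathcomp Require Import ring lra zify.
Set Implicit Arguments. Unset Strict Implicit. Unset Printing Implicit Defensive.
Import Order.TTheory GRing.Theory Num.Theory.
Local Open Scope ring_scope.
Local Open Scope complex_scope.

Lemma quadratic_ge0_linear_eq0 (R : realFieldType) (a g : R) :
  (forall s : R, 0 <= s * a + s * s * g) -> a = 0.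
Proof.
(* At s = - a / (g + 1) the form equals - a^2 / (g + 1)^2. *)
move=> h; have h1 := h 1; have h2 := h (-1).
have g1 : 0 < g + 1 by nra.
pose u := (g + 1)^-1.
have e : (g + 1) * u = 1 by rewrite /u mulfV // gt_eqF.
have up : 0 < u by rewrite /u invr_gt0.
have := h (- a * u).
have -> : - a * u * a + - a * u * (- a * u) * g =
          - (a * a) * u * u + a * a * u * ((g + 1) * u - 1) by ring.
by rewrite e subrr mulr0 addr0 !pmulr_lge0 //; nra.
Qed.

Lemma cquadratic_ge0_linear_eq0 (R : rcfType) (al be ga : R[i]) :
  (forall t : R[i], 0 <= t * al + t^* * be + t * t^* * ga) -> al = 0.
Proof.
(* Real and purely imaginary t reduce this to the real case. *)
case: al be ga => a1 a2 [b1 b2] [g1 g2] h.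
have Hr (s : R) : 0 <= s * (a1 + b1) + s * s * g1 /\ s * (a2 + b2) + s * s * g2 = 0.
  move: (h (s +i* 0)); rewrite lecE /=; simpc => /andP[/eqP e1 e2]; split; nra.
have Hi (s : R) : 0 <= s * (b2 - a2) + s * s * g1 /\ s * (a1 - b1) + s * s * g2 = 0.
  move: (h (0 +i* s)); rewrite lecE /=; simpc => /andP[/eqP e1 e2]; split; nra.
have := quadratic_ge0_linear_eq0 (fun s => (Hr s).1).
have := quadratic_ge0_linear_eq0 (fun s => (Hi s).1).
have [_ K1] := Hr 1; have [_ K2] := Hr (-1).
have [_ L1] := Hi 1; have [_ L2] := Hi (-1).
move=> E2 E1; apply/eqP; rewrite eq_complex /=; apply/andP; split; apply/eqP; nra.
Qed.

Section Adjoint.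
Variables (R : realType) (n : nat).
Local Notation C := R[i].

Lemma mxadjK (a : 'M[C]_n) : mxadj (mxadj a) = a.
Proof. by apply/matrixP => i j; rewrite !mxE conjcK. Qed.

Lemma mxadj1 : mxadj (1%:M : 'M[C]_n) = 1%:M.
Proof. by apply/matrixP => i j; rewrite !mxE eq_sym conjc_nat. Qed.

Lemma gram_form_ge0 k (X : 'I_k -> 'M[C]_n) (v : 'I_k -> 'I_n -> C) :
  0 <= \sum_(i < k) \sum_(j < k) \sum_(r < n) \sum_(s < n)
         (v i r)^* * (mxadj (X i) *m X j) r s * v j s.
Proof.
pose w m := \sum_(j < k) \sum_(s < n) X j m s * v j s.
have -> : \sum_(i < k) \sum_(j < k) \sum_(r < n) \sum_(s < n)
            (v i r)^* * (mxadj (X i) *m X j) r s * v j s =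
          \sum_(m < n) w m * (w m)^*.
  under eq_bigr => i _ do under eq_bigr => j _ do under eq_bigr => r _ do
     under eq_bigr => s _ do rewrite !mxE big_distrr big_distrl /=.
  under eq_bigr => i _ do rewrite exchange_big.
  under eq_bigr => i _ do under eq_bigr => r _ do under eq_bigr => j _ do
     rewrite exchange_big.
  under eq_bigr => i _ do under eq_bigr => r _ do rewrite exchange_big.
  under eq_bigr => i _ do rewrite exchange_big.
  rewrite exchange_big; apply: eq_bigr => m _; rewrite mulrC.
  rewrite rmorph_sum big_distrl; apply: eq_bigr => i _.
  rewrite rmorph_sum big_distrl; apply: eq_bigr => r _.
  rewrite big_distrr; apply: eq_bigr => j _.
  rewrite big_distrr; apply: eq_bigr => s _ /=.
  rewrite !mxE rmorphM /=; ring.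
by apply: sumr_ge0 => m _; apply: mulcJ_ge0.
Qed.

End Adjoint.

Section Shifts.
Variables (R : pzRingType) (n : nat).

Lemma mul_indicator_mx (g h : 'I_n -> nat) (P Q : pred 'I_n) :
  (\matrix_(r, m) (((m : nat) == g r) && P r)%:R : 'M[R]_n) *m
    \matrix_(m, s) (((m : nat) == h s) && Q s)%:R =
  \matrix_(r, s) [&& g r < n, g r == h s, P r & Q s]%N%:R.
Proof.
apply/matrixP => r s; rewrite !mxE.
case: (ltnP (g r) n) => hg /=.
  rewrite (bigD1 (Ordinal hg)) //= !mxE eqxx /= big1 ?addr0.
    by case: (P r); case: (g r == h s); case: (Q s); rewrite /= ?mul1r ?mul0r.
  by move=> m /negbTE ne; rewrite !mxE [(m : nat) == _]ne mul0r.
rewrite big1 // => m _; rewrite !mxE.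
by rewrite [(m : nat) == _](ltn_eqF (leq_trans (ltn_ord m) hg)) mul0r.
Qed.

Definition down_shift k : 'M[R]_n := \matrix_(r, m) ((r : nat) == m + k)%N%:R.
Definition up_shift k : 'M[R]_n := \matrix_(r, m) ((m : nat) == r + k)%N%:R.

(* The l and r forms are the shapes expected on the left and on the right of
   mul_indicator_mx. *)
Lemma down_shiftEl k :
  down_shift k = \matrix_(r, m) (((m : nat) == r - k) && (k <= r))%N%:R.
Proof.
by apply/matrixP => r m; rewrite !mxE; congr ((nat_of_bool _)%:R); apply/idP/idP; lia.
Qed.

Lemma down_shiftEr k :
  down_shift k = \matrix_(m, s) (((m : nat) == s + k)%N && true)%:R.
Proof. by apply/matrixP => r m; rewrite !mxE andbT. Qed.

Lemma up_shiftEl k :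
  up_shift k = \matrix_(r, m) (((m : nat) == r + k)%N && true)%:R.
Proof. by apply/matrixP => r m; rewrite !mxE andbT. Qed.

Lemma up_shiftEr k :
  up_shift k = \matrix_(m, s) (((m : nat) == s - k) && (k <= s))%N%:R.
Proof.
by apply/matrixP => r m; rewrite !mxE; congr ((nat_of_bool _)%:R); apply/idP/idP; lia.
Qed.

Lemma up_down_shift_sum1 k : (k <= n)%N ->
  up_shift k *m down_shift k + down_shift (n - k) *m up_shift (n - k) = 1%:M.
Proof.
move=> kn; rewrite {1}up_shiftEl {1}down_shiftEr down_shiftEl up_shiftEr.
rewrite !mul_indicator_mx; apply/matrixP => r s; rewrite !mxE -natrD.
have rn := ltn_ord r; have sn := ltn_ord s.
by rewrite -[r == s]/((r : nat) == s); congr (_%:R); lia.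
Qed.

Lemma delta_mx_shiftE (i j : 'I_n) :
  delta_mx i j = down_shift i *m (up_shift n.-1 *m down_shift (n.-1 - j)).
Proof.
have [i_n jn] := (ltn_ord i, ltn_ord j).
have -> : up_shift n.-1 *m down_shift (n.-1 - j) =
          \matrix_(m, s) (((m : nat) == 0) && (s == j))%N%:R.
  rewrite up_shiftEl down_shiftEr mul_indicator_mx; apply/matrixP => r s.
  rewrite !mxE; congr ((nat_of_bool _)%:R).
  have [rn sn] := (ltn_ord r, ltn_ord s).
  by rewrite -[s == j]/((s : nat) == j); apply/idP/idP; lia.
rewrite down_shiftEl mul_indicator_mx; apply/matrixP => r s.
rewrite !mxE; congr ((nat_of_bool _)%:R).
have [rn sn] := (ltn_ord r, ltn_ord s).
by rewrite -[s == j]/((s : nat) == j) -[r == i]/((r : nat) == i); apply/idP/idP; lia.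
Qed.

End Shifts.

Section ToeplitzShifts.
Variables (R : realType) (n : nat).
Local Notation C := R[i].

Lemma mxadj_down_shift k : mxadj (down_shift C n k) = up_shift C n k.
Proof. by apply/matrixP => r m; rewrite !mxE conjc_nat. Qed.

Lemma mxadj_up_shift k : mxadj (up_shift C n k) = down_shift C n k.
Proof. by apply/matrixP => r m; rewrite !mxE conjc_nat. Qed.

Lemma toeplitz_down_shift k : toeplitz (down_shift C n k).
Proof.
exists (fun z : int => (z == k%:Z)%:R); apply/matrixP => r m; rewrite !mxE.
by rewrite subr_eq -PoszD eqz_nat addnC.
Qed.

Lemma toeplitz_up_shift k : toeplitz (up_shift C n k).
Proof.
exists (fun z : int => (- z == k%:Z)%:R); apply/matrixP => r m; rewrite !mxE.
by rewrite opprB subr_eq -PoszD eqz_nat addnC.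
Qed.

Lemma toeplitz1 : toeplitz (1%:M : 'M[C]_n).
Proof.
exists (fun z : int => (z == 0)%:R); apply/matrixP => r m; rewrite !mxE.
by rewrite subr_eq0 eqz_nat.
Qed.

End ToeplitzShifts.

Section InnerProduct.
Variables (R : realType) (H : lmodType R[i]) (ip : H -> H -> R[i]).
Hypothesis hH : is_hilbert ip.

Lemma ipC x y : ip y x = (ip x y)^*.
Proof. by case: hH. Qed.

Lemma ip_eq0l d : (forall z, ip d z = 0) -> d = 0.
Proof. by case: hH => _ _ _ ip0 _ hd; apply: ip0; apply: hd. Qed.

Lemma ipDl x y z : ip (x + y) z = ip x z + ip y z.
Proof. by case: hH => ipl _ _ _ _; have := ipl 1 x y z; rewrite scale1r mul1r. Qed.

Lemma ipZl a x z : ip (a *: x) z = a * ip x z.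
Proof.
case: hH => ipl _ _ _ _; have := ipl a x 0 z; rewrite !addr0 => ->.
have := ipl 1 0 0 z; rewrite scaler0 addr0 mul1r -{1}[ip 0 z]addr0 => /addrI <-.
by rewrite addr0.
Qed.

Lemma ipNl x z : ip (- x) z = - ip x z.
Proof. by rewrite -scaleN1r ipZl mulN1r. Qed.

Lemma ipZr a x z : ip z (a *: x) = a^* * ip z x.
Proof. by rewrite ipC ipZl rmorphM /= -ipC. Qed.

Lemma ipNr x z : ip z (- x) = - ip z x.
Proof. by rewrite -scaleN1r ipZr rmorphN rmorph1 mulN1r. Qed.

End InnerProduct.

Section PointwiseLinear.
Variables (K : pzRingType) (V W : lmodType K) (X : Type) (f : V -> X -> W).
Hypothesis f_lin : forall c a b x, f (c *: a + b) x = c *: f a x + f b x.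

Lemma lin0 x : f 0 x = 0.
Proof.
by have := f_lin 1 0 0 x; rewrite scaler0 addr0 scale1r -{1}[f 0 x]addr0 => /addrI.
Qed.

Lemma linD a b x : f (a + b) x = f a x + f b x.
Proof. by rewrite -[a in LHS]scale1r f_lin scale1r. Qed.

Lemma linZ c a x : f (c *: a) x = c *: f a x.
Proof. by rewrite -[c *: a]addr0 f_lin lin0 addr0. Qed.

Lemma linN a x : f (- a) x = - f a x.
Proof. by rewrite -scaleN1r linZ scaleN1r. Qed.

Lemma lin_sum (I : finType) (F : I -> V) x : f (\sum_i F i) x = \sum_i f (F i) x.
Proof. by elim/big_rec2: _ => [|i y a _ <-]; rewrite ?lin0 ?linD. Qed.

End PointwiseLinear.

Section MultiplicativeDomain.
Variables (R : realType) (H : lmodType R[i]) (ip : H -> H -> R[i]) (n : nat).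
Local Notation C := R[i].
Variables pi phi : 'M[C]_n -> H -> H.
Hypotheses (hH : is_hilbert ip) (hpi : is_rep ip pi) (hphi : is_cp ip phi).
Hypothesis phi1 : forall x, phi 1%:M x = x.

Lemma pi_lin c a b x : pi (c *: a + b) x = c *: pi a x + pi b x.
Proof. by case: hpi. Qed.

Lemma phi_lin c a b x : phi (c *: a + b) x = c *: phi a x + phi b x.
Proof. by case: hphi. Qed.

Lemma pi_linr c x y a : pi a (c *: x + y) = c *: pi a x + pi a y.
Proof. by case: hpi => bpi _ _ _ _; case: (bpi a). Qed.

Lemma phi_linr c x y a : phi a (c *: x + y) = c *: phi a x + phi a y.
Proof. by case: hphi => bphi _ _; case: (bphi a). Qed.

Lemma pi1 x : pi 1%:M x = x.
Proof. by case: hpi. Qed.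

Lemma piM a b x : pi (a *m b) x = pi a (pi b x).
Proof. by case: hpi. Qed.

Lemma pi_adj a x y : ip (pi a x) y = ip x (pi (mxadj a) y).
Proof. by case: hpi. Qed.

Lemma phi_gram_ge0 k (X : 'I_k -> 'M[C]_n) (x : 'I_k -> H) :
  0 <= \sum_(i < k) \sum_(j < k) ip (phi (mxadj (X i) *m X j) (x j)) (x i).
Proof. by case: hphi => _ _ cp; apply: cp; apply: gram_form_ge0. Qed.

Definition agree a := forall x, phi a x = pi a x.

Definition schwarz_defect d x := ip (phi d x) x - ip (pi d x) x.

(* Positivity of phi on the Gram matrix of (1, c), tested on (- pi(c) x, x). *)
Lemma schwarz_defect_ge0 c : agree c -> agree (mxadj c) ->
  forall x, 0 <= schwarz_defect (mxadj c *m c) x.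
Proof.
move=> hc hc' x.
pose X (i : 'I_2) := nth 0 [:: 1%:M; c] i.
pose xv (i : 'I_2) := nth 0 [:: - pi c x; x] i.
have := phi_gram_ge0 X xv.
rewrite !big_ord_recl !big_ord0 /= !addr0 /X /xv /= mxadj1 !mul1mx mulmx1.
rewrite hc hc' phi1 (linN (fun c x y a => pi_linr c x y a)) !(ipNl hH) !(ipNr hH) opprK.
rewrite /schwarz_defect piM [ip (pi (mxadj c) _) x]pi_adj mxadjK.
by move/le_trans; apply; rewrite le_eqVlt; apply/orP; left; apply/eqP; ring.
Qed.

Lemma schwarz_defect_sum_eq0 d1 d2 : agree (d1 + d2) ->
  (forall x, 0 <= schwarz_defect d1 x) -> (forall x, 0 <= schwarz_defect d2 x) ->
  forall x, schwarz_defect d1 x = 0.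
Proof.
move=> hd h1 h2 x.
have : schwarz_defect d1 x + schwarz_defect d2 x = 0.
  have := congr1 (ip^~ x) (hd x); rewrite /= (linD phi_lin) (linD pi_lin) !(ipDl hH).
  by rewrite /schwarz_defect addrACA => ->; ring.
by move/eqP; rewrite paddr_eq0 // => /andP[/eqP].
Qed.

(* Positivity of phi on the Gram matrix of (1, c, b), tested on
   (- pi(c) z, z, t w), is a quadratic inequality in t whose linear
   coefficient must vanish. *)
Lemma phi_mxadjM c : agree c -> agree (mxadj c) ->
  (forall x, schwarz_defect (mxadj c *m c) x = 0) ->
  forall b w, phi (mxadj c *m b) w = pi (mxadj c) (phi b w).
Proof.
move=> hc hc' hdef b w.
apply/eqP; rewrite -subr_eq0; apply/eqP; apply: (ip_eq0l hH) => z.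
rewrite (ipDl hH) (ipNl hH) pi_adj mxadjK.
apply: (@cquadratic_ge0_linear_eq0 _ _
  (- ip (phi (mxadj b) (pi c z)) w + ip (phi (mxadj b *m c) z) w)
  (ip (phi (mxadj b *m b) w) w)) => t.
pose X (i : 'I_3) := nth 0 [:: 1%:M; c; b] i.
pose xv (i : 'I_3) := nth 0 [:: - pi c z; z; t *: w] i.
have := phi_gram_ge0 X xv.
rewrite !big_ord_recl !big_ord0 /= !addr0 /X /xv /= mxadj1 !mul1mx !mulmx1.
rewrite hc hc' phi1.
move/eqP: (hdef z); rewrite subr_eq0 => /eqP ->.
rewrite (linN (fun c x y a => pi_linr c x y a)) !(linN (fun c x y a => phi_linr c x y a)).
rewrite !(linZ (fun c x y a => phi_linr c x y a)).
rewrite !(ipNl hH) !(ipNr hH) !(ipZl hH) !(ipZr hH) opprK.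
rewrite piM [ip (pi (mxadj c) _) z]pi_adj mxadjK.
by move/le_trans; apply; rewrite le_eqVlt; apply/orP; left; apply/eqP; ring.
Qed.

End MultiplicativeDomain.

Section ToeplitzHyperrigid.
Variables (R : realType) (H : lmodType R[i]) (ip : H -> H -> R[i]) (n : nat).
Local Notation C := R[i].
Local Notation S := (down_shift C n).
Local Notation S' := (up_shift C n).
Variables pi phi : 'M[C]_n -> H -> H.
Hypotheses (hH : is_hilbert ip) (hpi : is_rep ip pi) (hphi : is_cp ip phi).
Hypothesis phi_toeplitz : forall a, toeplitz a -> agree pi phi a.
Local Hint Resolve toeplitz_down_shift toeplitz_up_shift : core.

Let phi1 x : phi 1%:M x = x.
Proof. by rewrite (phi_toeplitz (toeplitz1 R n)) (pi1 hpi). Qed.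

Let defect_toeplitz_ge0 c : toeplitz c -> toeplitz (mxadj c) ->
  forall x, 0 <= schwarz_defect ip pi phi (mxadj c *m c) x.
Proof. by move=> tc tc'; apply: schwarz_defect_ge0 => //; apply: phi_toeplitz. Qed.

Let phi_toeplitzM c : toeplitz c -> toeplitz (mxadj c) ->
  (forall x, schwarz_defect ip pi phi (mxadj c *m c) x = 0) ->
  forall b w, phi (mxadj c *m b) w = pi (mxadj c) (phi b w).
Proof. by move=> tc tc'; apply: phi_mxadjM => //; apply: phi_toeplitz. Qed.

Lemma schwarz_defect_shift k : (k <= n)%N ->
  (forall x, schwarz_defect ip pi phi (S k *m S' k) x = 0) /\
  (forall x, schwarz_defect ip pi phi (S' (n - k) *m S (n - k)) x = 0).
Proof.
move=> kn; have sum1 := up_down_shift_sum1 C (leq_subr k n); rewrite subKn // in sum1.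
have agree_sum := phi_toeplitz (toeplitz1 R n).
have ge0S x : 0 <= schwarz_defect ip pi phi (S k *m S' k) x.
  by rewrite -{1}mxadj_up_shift; apply: defect_toeplitz_ge0; rewrite ?mxadj_up_shift.
have ge0S' x : 0 <= schwarz_defect ip pi phi (S' (n - k) *m S (n - k)) x.
  by rewrite -{1}mxadj_down_shift; apply: defect_toeplitz_ge0; rewrite ?mxadj_down_shift.
split.
  by apply: (schwarz_defect_sum_eq0 hH hpi hphi (d2 := S' (n - k) *m S (n - k)));
    rewrite // addrC sum1.
by apply: (schwarz_defect_sum_eq0 hH hpi hphi (d2 := S k *m S' k)); rewrite // sum1.
Qed.

Lemma toeplitz_agree_all a : agree pi phi a.
Proof.
move=> x.
have phi_shiftM (i : 'I_n) b w : phi (S i *m b) w = pi (S i) (phi b w).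
  rewrite -mxadj_up_shift phi_toeplitzM ?mxadj_up_shift //.
  exact: (schwarz_defect_shift (ltnW (ltn_ord i))).1.
have phi_shift'M b w : (0 < n)%N -> phi (S' n.-1 *m b) w = pi (S' n.-1) (phi b w).
  move=> n_gt0; rewrite -mxadj_down_shift phi_toeplitzM ?mxadj_down_shift //.
  by have [_] := schwarz_defect_shift n_gt0; rewrite subn1.
have phi_delta (i j : 'I_n) y : phi (delta_mx i j) y = pi (delta_mx i j) y.
  rewrite (delta_mx_shiftE C i j) phi_shiftM phi_shift'M ?phi_toeplitz // ?(piM hpi) //.
  exact: leq_ltn_trans (leq0n i) (ltn_ord i).
rewrite (matrix_sum_delta a) !(lin_sum (phi_lin hphi)) !(lin_sum (pi_lin hpi)).
apply: eq_bigr => i _; rewrite !(lin_sum (phi_lin hphi)) !(lin_sum (pi_lin hpi)).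
by apply: eq_bigr => j _; rewrite (linZ (phi_lin hphi)) (linZ (pi_lin hpi)) phi_delta.
Qed.

End ToeplitzHyperrigid.

Theorem proposition2p3 (R : realType) (n : nat) :
  (2 <= n)%N -> hyperrigid_in_Mn (@toeplitz R n).
Proof.
move=> _ H ip hH pi hpi phi hphi phi_toeplitz.
exact: toeplitz_agree_all hH hpi hphi phi_toeplitz.
Qed.
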